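(* Let $\mathbb X$ be a separable reflexive Banach space and $\mu\in\mathbb X$. Fix $\alpha\in(0,\tfrac12)$, $0<p<\alpha$ and $\varepsilon>0$. Let $\hat\mu_1,\ldots,\hat\mu_k$ be random elements of $\mathbb X$, and let $J\subseteq\{1,\ldots,k\}$ have $|J|=(1-\tau)k$, where $0\le\tau<\frac{\alpha-p}{1-p}$. Assume: - the $\hat\mu_j$, $j\in J$, are independent; - $\Pr(\|\hat\mu_j-\mu\|>\varepsilon)\le p$ for all $j\in J$; - the $\hat\mu_j$ with $j\notin J$ are arbitrary. Let $\hat\mu=\mathrm{med}(\hat\mu_1,\ldots,\hat\mu_k)$. Then $$\Pr\big(\|\hat\mu-\mu\|>C_\alpha\varepsilon\big)\le\exp\Big(-k(1-\tau)\,\psi\Big(\tfrac{\alpha-\tau}{1-\tau};p\Big)\Big).$$ Here $C_\alpha=\frac{2(1-\alpha)}{1-2\alpha}$ in general, and $C_\alpha=(1-\alpha)\sqrt{\frac1{1-2\alpha}}$ when $\mathbb X$ is a Hilbert space.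
   Context: $\mathrm{med}(x_1,\ldots,x_k)$ denotes a geometric median, i.e. any minimizer over $y\in\mathbb X$ of $\sum_{j=1}^k\|y-x_j\|$. For $0<p<a<\tfrac12$, $$\psi(a;p)=(1-a)\log\frac{1-a}{1-p}+a\log\frac{a}{p}.$$ *)

From HB Require Import structures.
From mathcomp Require Import all_boot all_order all_algebra.
From mathcomp Require Import all_classical all_reals all_analysis.
Set Implicit Arguments. Unset Strict Implicit. Unset Printing Implicit Defensive.
Import Order.TTheory GRing.Theory Num.Theory.
Import numFieldNormedType.Exports.
Local Open Scope classical_set_scope.
Local Open Scope ring_scope.

Definition psi {R : realType} (a p : R) : R :=
  (1 - a) * ln ((1 - a) / (1 - p)) + a * ln (a / p).

Definition is_geomed {R : realType} {V : normedModType R} {k : nat}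
  (x : 'I_k -> V) (y : V) : Prop :=
  forall z : V, \sum_(j < k) `|y - x j| <= \sum_(j < k) `|z - x j|.

Definition borel_set {V : topologicalType} (B : set V) : Prop := <<s open >> B.

Definition random_element {d : measure_display} {T : measurableType d}
  {V : topologicalType} (X : T -> V) : Prop :=
  forall B : set V, borel_set B -> measurable (X @^-1` B).

Definition indep_family {R : realType} {d : measure_display} {T : measurableType d}
  (P : probability T R) {V : topologicalType} {k : nat}
  (J : {set 'I_k}) (X : 'I_k -> T -> V) : Prop :=
  forall (K : {set 'I_k}) (B : 'I_k -> set V),
    K \subset J -> (forall j, j \in K -> borel_set (B j)) ->
    P (\bigcap_(j in [set j | j \in K]) (X j @^-1` B j))
    = (\prod_(j in K) P (X j @^-1` B j))%E.

Definition separable_space (V : topologicalType) : Prop :=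
  exists D : set V, countable D /\ dense D.

Definition dual_elt {R : realType} {V : normedModType R} (f : V -> R) : Prop :=
  (forall (a : R) (x y : V), f (a *: x + y) = a * f x + f y) /\ continuous f.

(* Boundedness of Phi is expressed through the
   operator norm: |Phi f| <= C * M whenever |f x| <= M ||x|| for all x. *)
Definition reflexive_space {R : realType} (V : normedModType R) : Prop :=
  forall Phi : (V -> R) -> R,
    (forall (a : R) (f g : V -> R), dual_elt f -> dual_elt g ->
        Phi (fun x => a * f x + g x) = a * Phi f + Phi g) ->
    (exists C : R, forall (f : V -> R) (M : R), dual_elt f -> 0 <= M ->
        (forall x, `|f x| <= M * `|x|) -> `|Phi f| <= C * M) ->
    exists x0 : V, forall f, dual_elt f -> Phi f = f x0.

Definition hilbert_norm {R : realType} (V : normedModType R) : Prop :=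
  exists ip : V -> V -> R,
    (forall x y, ip x y = ip y x) /\
    (forall (a : R) (x y z : V), ip (a *: x + y) z = a * ip x z + ip y z) /\
    (forall x, `|x| ^+ 2 = ip x x).

From HB Require Import structures.
From mathcomp Require Import all_boot all_order all_algebra.
From mathcomp Require Import all_classical all_reals all_analysis.
From mathcomp Require Import ring lra.
Import Order.TTheory GRing.Theory Num.Theory.
Import numFieldNormedType.Exports.
Local Open Scope classical_set_scope.
Local Open Scope ring_scope.

(* If the geometric median m is farther than C_alpha * eps from mu, then more than
   alpha * k of the points are farther than eps from mu: otherwise moving m a little
   towards mu would decrease sum_j |m - x_j| (in a Banach space by the triangle
   inequality, in a Hilbert space by a first-order expansion of the norm along the
   segment).  Since at most k - |J| = tau * k points are arbitrary, more than
   a * |J| of the independent estimators, a = (alpha - tau) / (1 - tau), are then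
   eps-far, each with probability at most p.  The moment generating function of this
   count is computed from the law of the random set of failing estimators,
   E[(1 + c)^N] = sum_S c^|S| P(all j in S fail) <= (1 + c p)^|J|, and the Chernoff
   bound at the optimal parameter is exp(-|J| psi(a; p)). *)

Lemma sumr_if_const (R : pzRingType) (I : finType) (b : pred I) (A B : R) :
  \sum_i (if b i then A else B) = #|b|%:R * A + (#|I|%:R - #|b|%:R) * B.
Proof.
rewrite (bigID b) /= (eq_bigr (fun=> A)) => [|i ->//].
rewrite [X in _ + X](eq_bigr (fun=> B)) => [|i /negbTE ->//].
rewrite !sumr_const -(cardC b) natrD (addrC #|b|%:R) addrK.
rewrite -[A *+ _]mulr_natl -[B *+ _]mulr_natl.
by congr (_ + _ * _); apply: eq_card.
Qed.

Lemma geomed_far_count {R : realType} {V : normedModType R} {k} {x : 'I_k -> V}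
    {m z : V} {r alpha : R} :
  (0 < k)%N -> 0 < alpha < 1 / 2 -> 0 <= r -> is_geomed x m ->
  2 * (1 - alpha) / (1 - 2 * alpha) * r < `|m - z| ->
  alpha * k%:R < #|[pred j | r < `|x j - z|]|%:R.
Proof.
move=> k_gt0 /andP[alpha_gt0 alpha_lt] r_ge0 xm.
have gap_gt0 : 0 < 1 - 2 * alpha by lra.
rewrite mulrAC ltr_pdivrMr // => far_m.
set D := `|m - z|.
have : \sum_j (`|z - x j| - `|m - x j|) <=
       \sum_j (if r < `|x j - z| then D else 2 * r - D).
  apply: ler_sum => j _; case: ifP => [_|/negbT].
    by have := ler_distD m z (x j); rewrite (distrC z m) -/D; lra.
  rewrite -leNgt (distrC _ z) => close.
  by have := ler_distD (x j) m z; rewrite (distrC (x j)) -/D; lra.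
rewrite sumrB sumr_if_const card_ord.
set b := #|_|; move: (xm z); rewrite -subr_ge0 => /le_trans/[apply] bound.
rewrite ltNge; apply/negP => b_le; move: far_m; rewrite -/D => far_m.
have k_ge1 : 1 <= k%:R :> R by rewrite ler1n.
(* (1 - 2 alpha) * bound = - (k - 2 b) ((1 - 2 alpha) D - 2 (1 - alpha) r)
                          - 2 r (alpha k - b) *)
have := mulr_ge0 (ltW gap_gt0) bound.
have : 0 < (k%:R - 2 * b%:R) * ((1 - 2 * alpha) * D - 2 * (1 - alpha) * r).
  by apply: mulr_gt0; nra.
have : 0 <= r * (alpha * k%:R - b%:R) by apply: mulr_ge0; lra.
lra.
Qed.

Lemma card_le_card_setI_setC {I : finType} (J : {set I}) (b : pred I) :
  (#|b| <= #|[set j in J | b j]| + #|~: J|)%N.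
Proof.
have -> : #|b| = #|[set j | b j]%SET| by apply: eq_card => j; rewrite inE.
rewrite -(cardsID J).
apply: leq_add; apply: subset_leq_card; apply/fintype.subsetP => j; rewrite !inE.
  by case/andP => -> ->.
by case/andP => -> _.
Qed.

Lemma card_setI_gt {R : realFieldType} {I : finType} (J : {set I}) (b : pred I)
    (alpha tau : R) :
  tau < 1 -> #|J|%:R = (1 - tau) * #|I|%:R -> alpha * #|I|%:R < #|b|%:R ->
  (alpha - tau) / (1 - tau) * #|J|%:R < #|[set j in J | b j]|%:R.
Proof.
move=> tau_lt1 cardJ b_gt.
have cardCJ : #|~: J|%:R = #|I|%:R - #|J|%:R :> R.
  by rewrite -(cardsC J) natrD addrC addKr.
have -> : (alpha - tau) / (1 - tau) * #|J|%:R = (alpha - tau) * #|I|%:R.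
  by rewrite cardJ mulrA divfK // lt0r_neq0 // subr_gt0.
have := card_le_card_setI_setC J b; rewrite -(ler_nat R) natrD cardCJ; lra.
Qed.

Section InnerProductNorm.
Context {R : realType} {V : normedModType R} {ip : V -> V -> R}.

Lemma hilbert_radius_gap (alpha r D : R) :
  0 < alpha < 1 / 2 -> 0 <= r ->
  (1 - alpha) * Num.sqrt (1 / (1 - 2 * alpha)) * r < D ->
  r < D /\ alpha * D < (1 - alpha) * Num.sqrt (D ^+ 2 - r ^+ 2).
Proof.
move=> /andP[alpha_gt0 alpha_lt] r_ge0 far.
have gap_gt0 : 0 < 1 - 2 * alpha by lra.
set s := Num.sqrt _ in far.
have s2 : s ^+ 2 * (1 - 2 * alpha) = 1.
  rewrite sqr_sqrtr ?divr_ge0 ?ltW //.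
  by rewrite mul1r mulVf // gt_eqF.
have s_ge0 : 0 <= s := sqrtr_ge0 _.
have D_ge0 : 0 <= D.
  by apply: le_trans (ltW far); rewrite !mulr_ge0 //; lra.
have far2 : (1 - alpha) ^+ 2 * r ^+ 2 < (1 - 2 * alpha) * D ^+ 2.
  have -> : (1 - alpha) ^+ 2 * r ^+ 2 = (1 - 2 * alpha) * ((1 - alpha) * s * r) ^+ 2.
    by rewrite -[LHS]mulr1 -[X in _ * X]s2; ring.
  have lhs_ge0 : 0 <= (1 - alpha) * s * r by rewrite !mulr_ge0 //; lra.
  by rewrite ltr_pM2l // ltr_pXn2r.
have rD : r < D.
  rewrite -(ltr_pXn2r (n := 2)) //.
  rewrite -(ltr_pM2l gap_gt0); apply: le_lt_trans far2.
  by rewrite ler_wpM2r ?sqr_ge0 //; nra.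
have rho2 : Num.sqrt (D ^+ 2 - r ^+ 2) ^+ 2 = D ^+ 2 - r ^+ 2.
  by rewrite sqr_sqrtr // subr_ge0 ler_pXn2r // ltW.
have aD_ge0 : 0 <= alpha * D by rewrite mulr_ge0 // ltW.
have rhs_ge0 : 0 <= (1 - alpha) * Num.sqrt (D ^+ 2 - r ^+ 2).
  by rewrite mulr_ge0 //; lra.
split=> //; rewrite -(ltr_pXn2r (n := 2)) // !exprMn rho2; nra.
Qed.

Hypotheses (ipC : forall x y, ip x y = ip y x)
  (ip_linear : forall (a : R) (x y z : V), ip (a *: x + y) z = a * ip x z + ip y z)
  (sqr_norm_ip : forall x, `|x| ^+ 2 = ip x x).

Lemma sqr_normDZ (x y : V) (a : R) :
  `|x + a *: y| ^+ 2 = `|x| ^+ 2 + 2 * a * ip x y + a ^+ 2 * `|y| ^+ 2.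
Proof.
have ip0l w : ip 0 w = 0 by have := ip_linear 1 0 0 w; rewrite scale1r addr0; lra.
have ipZl c v w : ip (c *: v) w = c * ip v w.
  by have := ip_linear c v 0 w; rewrite addr0 ip0l addr0.
have ipDl v v' w : ip (v + v') w = ip v w + ip v' w.
  by have := ip_linear 1 v v' w; rewrite scale1r mul1r.
rewrite !sqr_norm_ip ipDl ipZl (ipC x (x + _)) (ipC y (x + _)) !ipDl !ipZl (ipC y x).
ring.
Qed.

Lemma norm_towards_close_le (w u : V) (r t : R) :
  0 <= r < `|u| -> `|w + u| <= r -> 0 <= t ->
  t * Num.sqrt (`|u| ^+ 2 - r ^+ 2) <= (`|u| - r) / 2 ->
  `|w + t *: u| <= `|w| - t * Num.sqrt (`|u| ^+ 2 - r ^+ 2)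
                     + t ^+ 2 * (`|u| ^+ 2 / (`|u| - r)).
Proof.
move=> /andP[r_ge0 rD] close t_ge0.
set D := `|u|; set a := `|w|; set rho := Num.sqrt _; set K := D ^+ 2 / (D - r) => t_small.
have delta_gt0 : 0 < D - r by rewrite subr_gt0.
have delta_le : D - r <= a.
  by have := ler_normB (w + u) w; rewrite addrAC subrr add0r -/D -/a; lra.
have D_ge0 : 0 <= D := normr_ge0 u.
have rho2 : rho ^+ 2 = D ^+ 2 - r ^+ 2.
  by rewrite sqr_sqrtr // subr_ge0 ler_pXn2r //; exact: ltW.
have KE : K * (D - r) = D ^+ 2 by rewrite mulfVK ?gt_eqF.
(* The first-order decrease along u: 2 <w, u> <= r^2 - a^2 - D^2 <= - 2 a rho. *)
have ip_le : 2 * ip w u <= - 2 * a * rho.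
  have := sqr_normDZ w u 1; rewrite scale1r expr1n mulr1 mul1r -/a -/D.
  have : `|w + u| ^+ 2 <= r ^+ 2 by have := normr_ge0 (w + u); rewrite !expr2; nra.
  have := sqr_ge0 (a - rho); nra.
have K_ge0 : 0 <= K by rewrite divr_ge0 ?sqr_ge0 // ltW.
rewrite -(ler_pXn2r (n := 2)) ?nnegrE //; last first.
  have := mulr_ge0 (sqr_ge0 t) K_ge0; lra.
rewrite sqr_normDZ -/a -/D.
have : t ^+ 2 * D ^+ 2 <= 2 * (a - t * rho) * (t ^+ 2 * K).
  have tK_ge0 := mulr_ge0 (sqr_ge0 t) K_ge0.
  have : D - r <= 2 * (a - t * rho) by lra.
  rewrite -KE; nra.
have := sqr_ge0 (t * rho); have := sqr_ge0 (t ^+ 2 * K).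
have := ler_wpM2l t_ge0 ip_le.
nra.
Qed.

Lemma geomed_far_count_ip {k} {x : 'I_k -> V} {m z : V} {r alpha : R} :
  (0 < k)%N -> 0 < alpha < 1 / 2 -> 0 <= r -> is_geomed x m ->
  (1 - alpha) * Num.sqrt (1 / (1 - 2 * alpha)) * r < `|m - z| ->
  alpha * k%:R < #|[pred j | r < `|x j - z|]|%:R.
Proof.
move=> k_gt0 alpha_bounds r_ge0 xm /(hilbert_radius_gap _ _ _ alpha_bounds r_ge0).
move: alpha_bounds => /andP[alpha_gt0 alpha_lt].
set u := z - m; have uD : `|u| = `|m - z| by rewrite distrC.
set D := `|m - z| in uD *; set rho := Num.sqrt _ => -[rD gap].
set b := #|_|; rewrite ltNge; apply/negP => b_le.
pose g : R := k%:R - b%:R; pose K := D ^+ 2 / (D - r).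
have k_ge1 : 1 <= k%:R :> R by rewrite ler1n.
have D_gt0 : 0 < D by lra.
have rho_gt0 : 0 < rho by have := mulr_gt0 alpha_gt0 D_gt0; nra.
have K_gt0 : 0 < K by rewrite divr_gt0 ?exprn_gt0 ?subr_gt0.
have g_gt0 : 0 < g by rewrite /g; nra.
have slack : 0 < g * rho - b%:R * D by rewrite /g; nra.
pose t := Num.min ((D - r) / 2 / rho : R) ((g * rho - b%:R * D) / 2 / (g * K)).
have t_gt0 : 0 < t.
  by rewrite /t lt_min; apply/andP; split; rewrite !divr_gt0 //; nra.
have t_rho : t * rho <= (D - r) / 2.
  have : t <= (D - r) / 2 / rho by rewrite /t ge_min lexx.
  by rewrite ler_pdivlMr.
have t_K : t * (g * K) <= (g * rho - b%:R * D) / 2.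
  have : t <= (g * rho - b%:R * D) / 2 / (g * K) by rewrite /t ge_min lexx orbT.
  by rewrite ler_pdivlMr // mulr_gt0.
have step j : `|m + t *: u - x j| <= `|m - x j| +
    (if r < `|x j - z| then t * D else t ^+ 2 * K - t * rho).
  rewrite addrAC; case: ifP => [_ | /negbT]; last rewrite -leNgt => close.
    by rewrite (le_trans (ler_normD _ _)) // normrZ uD gtr0_norm.
  have close_u : `|m - x j + u| <= r by rewrite /u addrC addrA subrK distrC.
  have := norm_towards_close_le (m - x j) u r t; rewrite uD -/rho -/K.
  by rewrite rD r_ge0 close_u (ltW t_gt0) t_rho => /(_ isT isT isT isT); lra.
(* Moving m by t towards z changes the sum of distances by at most
   t * (b D - g rho + t g K) < 0. *)
have := xm (m + t *: u); move/le_trans/(_ (ler_sum _ (fun j _ => step j))).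
rewrite big_split sumr_if_const card_ord /= -/b -/g.
nra.
Qed.

End InnerProductNorm.

Section FiniteValuedMap.
Context {d} {T : measurableType d} {R : realType} (mu : {measure set T -> \bar R})
  {I : finType} {f : T -> I}.
Hypothesis mf : forall i, measurable (f @^-1` [set i]).

Let preimage_bigcup (F : pred I) :
  f @^-1` [set i | F i] = \bigcup_(i in [set i | F i]) f @^-1` [set i].
Proof. by apply/seteqP; split=> [w Fw|w [i Fi /= ->]]; [exists (f w)|]. Qed.

Lemma measurable_preimage_fin (F : pred I) : measurable (f @^-1` [set i | F i]).
Proof.
by rewrite preimage_bigcup; apply: fin_bigcup_measurable => // i _; exact: mf.
Qed.

Lemma measure_preimage_fin (F : pred I) :
  mu (f @^-1` [set i | F i]) = (\sum_(i | F i) mu (f @^-1` [set i]))%E.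
Proof.
rewrite preimage_bigcup measure_fin_bigcup.
- rewrite (fsbigE (enum F)) ?enum_uniq //.
  + by rewrite big_enum_cond; apply: eq_bigl => i; rewrite mem_setE andbb unfold_in.
  + by move=> i /=; rewrite mem_enum.
  + by move=> i Fi; rewrite mem_enum unfold_in Fi.
- exact: finite_finset.
- by move=> i j _ _ [w [/= <- <-]].
- by move=> i _; exact: mf.
Qed.
End FiniteValuedMap.

Lemma sum_subset_expr (R : comPzSemiRingType) (I : finType) (U : {set I}) (x : R) :
  \sum_(S : {set I} | S \subset U) x ^+ #|S| = (1 + x) ^+ #|U|.
Proof.
pose F i : R := if i \in U then x else 0.
have -> : (1 + x) ^+ #|U| = \prod_i (F i + 1).
  rewrite -prodr_const big_mkcond /=; apply: eq_bigr => i _.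
  by rewrite /F; case: (i \in U); rewrite ?add0r // addrC.
rewrite bigA_distr [LHS]big_mkcond /=; apply: eq_bigr => S _.
rewrite -big_mkcond /=; case: ifP => [SU|/negbT/fintype.subsetPn[i iS iU]].
  by rewrite -prodr_const; apply: eq_bigr => i iS; rewrite /F (fintype.subsetP SU).
by rewrite (bigD1 i) //= /F (negbTE iU) mul0r.
Qed.

Lemma sum_expr_card_le (R : numDomainType) (I : finType) (J : {set I})
    (q : {set I} -> R) (p c : R) :
  (forall U : {set I}, ~~ (U \subset J) -> q U = 0) ->
  (forall S : {set I}, S \subset J ->
     \sum_(U : {set I} | S \subset U) q U <= p ^+ #|S|) ->
  0 <= c ->
  \sum_(U : {set I}) q U * (1 + c) ^+ #|U| <= (1 + c * p) ^+ #|J|.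
Proof.
move=> qJ q_upper c_ge0.
have -> : \sum_(U : {set I}) q U * (1 + c) ^+ #|U| =
          \sum_(S : {set I}) c ^+ #|S| * \sum_(U : {set I} | S \subset U) q U.
  under eq_bigr do rewrite -sum_subset_expr mulr_sumr.
  rewrite (exchange_big_dep predT) //=; apply: eq_bigr => S _; rewrite mulr_sumr.
  by apply: eq_bigr => U _; rewrite mulrC.
rewrite -sum_subset_expr [X in _ <= X]big_mkcond; apply: ler_sum => S _.
case: ifP => SJ; first by rewrite exprMn ler_wpM2l ?exprn_ge0 ?q_upper.
rewrite big1 ?mulr0 // => U SU; apply: qJ.
by apply: contraFN SJ => /(fintype.subset_trans SU).
Qed.

Lemma sum_card_gt_le {R : realType} {I : finType} (q : {set I} -> R) (lam thr : R) :
  (forall U, 0 <= q U) -> 0 <= lam ->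
  \sum_(U : {set I} | thr < #|U|%:R) q U <=
    expR (- (lam * thr)) * \sum_(U : {set I}) q U * expR lam ^+ #|U|.
Proof.
move=> q_ge0 lam_ge0; rewrite big_mkcond mulr_sumr; apply: ler_sum => U _.
case: ifP => [thr_lt|_]; last by rewrite !mulr_ge0 ?exprn_ge0 ?expR_ge0.
rewrite mulrCA ler_peMr // -expRM_natl -expRD.
by apply: le_trans (expR_ge1Dx _); rewrite lerDl; nra.
Qed.

Lemma measurable_eq_bool {d} {T : measurableType d} (g : T -> bool) (b : bool) :
  measurable [set w | g w] -> measurable [set w | g w = b].
Proof.
case: b => // mg; rewrite (_ : [set w | g w = false] = ~` [set w | g w]).
  exact: measurableC.
by apply/seteqP; split=> w /=; case: (g w).
Qed.

Lemma expR_ln_chernoff (R : realType) (n : nat) (a p : R) : 0 < p -> p < a -> a < 1 ->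
  let x := a * (1 - p) / (p * (1 - a)) in
  expR (- (ln x * (a * n%:R))) * (1 + (x - 1) * p) ^+ n = expR (- (n%:R * psi a p)).
Proof.
move=> p_gt0 pa a_lt1 x.
have a_gt0 : 0 < a by exact: lt_trans pa.
have y_gt0 : 0 < (1 - p) / (1 - a) by rewrite divr_gt0 // subr_gt0 // (lt_trans pa).
have ap_gt0 : 0 < a / p by rewrite divr_gt0.
have -> : x = a / p * ((1 - p) / (1 - a)).
  by rewrite /x; field; rewrite !gt_eqF // subr_gt0.
have -> : 1 + (a / p * ((1 - p) / (1 - a)) - 1) * p = (1 - p) / (1 - a).
  by field; rewrite !gt_eqF // subr_gt0.
rewrite -[X in X ^+ n]lnK ?posrE // -expRM_natl -expRD /psi lnM ?posrE //.
rewrite -[(1 - a) / (1 - p)]invf_div lnV ?posrE //.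
by congr expR; ring.
Qed.

Section IndependentEventsCount.
Context {d} {T : measurableType d} {R : realType} (P : probability T R)
  {I : finType} (J : {set I}) (E : I -> T -> bool) (p : R).
Hypotheses (mE : forall i, measurable [set w | E i w])
  (E_indep : forall S : {set I}, S \subset J ->
     P (\bigcap_(j in [set j | j \in S]) [set w | E j w]) =
     (\prod_(j in S) P [set w | E j w])%E)
  (PE_le : forall j, j \in J -> (P [set w | E j w] <= p%:E)%E).

Let occurring w := [set j in J | E j w].

Let measurable_occurring_fiber U : measurable (occurring @^-1` [set U]).
Proof.
have -> : occurring @^-1` [set U] =
    \bigcap_(j in [set: I]) [set w | (j \in J) && E j w = (j \in U)].
  apply/seteqP; split=> [w <- j _ /=|w hw]; first by rewrite inE.
  by apply/setP => j; rewrite inE; apply: hw.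
apply: fin_bigcap_measurable => // j _; apply: measurable_eq_bool.
case: (j \in J) => //=; rewrite (_ : [set w | false] = set0) //.
by apply/seteqP; split.
Qed.

Let q U := fine (P (occurring @^-1` [set U])).

Let q_ge0 U : 0 <= q U. Proof. exact: fine_ge0. Qed.

Let measure_occurringE (F : pred {set I}) :
  P (occurring @^-1` [set U | F U]) = (\sum_(U | F U) q U)%:E.
Proof.
rewrite measure_preimage_fin; last exact: measurable_occurring_fiber.
by rewrite -sumEFin; apply: eq_bigr => U _; rewrite fineK // fin_num_measure.
Qed.

Let q_out (U : {set I}) : ~~ (U \subset J) -> q U = 0.
Proof.
move=> UJ; rewrite /q (_ : _ @^-1` _ = set0) ?measure0 //.
apply/seteqP; split=> w //= occ; move: UJ; rewrite -occ.
by apply/negP/negPn/fintype.subsetP => j; rewrite inE => /andP[].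
Qed.

Let q_upper (S : {set I}) :
  S \subset J -> \sum_(U : {set I} | S \subset U) q U <= p ^+ #|S|.
Proof.
move=> SJ; rewrite -lee_fin -measure_occurringE.
have -> : occurring @^-1` [set U : {set I} | S \subset U] =
          \bigcap_(j in [set j | j \in S]) [set w | E j w].
  apply/seteqP; split=> w /= => [/fintype.subsetP SU j jS | Sw].
    by have := SU j jS; rewrite inE => /andP[].
  by apply/fintype.subsetP => j jS; rewrite inE (fintype.subsetP SJ _ jS) Sw.
rewrite E_indep // (eq_bigr (fun j => (fine (P [set w | E j w]))%:E)); last first.
  by move=> j _; rewrite fineK // fin_num_measure.
rewrite prodEFin lee_fin -prodr_const; apply: ler_prod => j jS.
rewrite fine_ge0 //= -lee_fin fineK ?fin_num_measure //.
exact: PE_le (fintype.subsetP SJ _ jS).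
Qed.

Lemma measurable_card_occurring_gt (thr : R) :
  measurable [set w | thr < #|[set j in J | E j w]|%:R].
Proof.
exact: (measurable_preimage_fin measurable_occurring_fiber (fun U => thr < #|U|%:R)).
Qed.

Lemma card_occurring_gt_expR (lam thr : R) : 0 <= lam ->
  (P [set w | (thr < #|[set j in J | E j w]|%:R)%R] <=
   (expR (- (lam * thr)) * (1 + (expR lam - 1) * p) ^+ #|J|)%:E)%E.
Proof.
move=> lam_ge0; rewrite (measure_occurringE (fun U => thr < #|U|%:R)) lee_fin /=.
apply: le_trans (sum_card_gt_le _ lam thr q_ge0 lam_ge0) _.
rewrite ler_wpM2l ?expR_ge0 //.
set c := expR lam - 1; have -> : expR lam = 1 + c by rewrite subrKC.
apply: sum_expr_card_le q_out q_upper _.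
by rewrite /c; have := expR_ge1Dx lam; lra.
Qed.

Lemma card_occurring_gt_psi (a : R) : 0 < p -> p < a -> a < 1 ->
  (P [set w | (a * #|J|%:R < #|[set j in J | E j w]|%:R)%R] <=
   (expR (- (#|J|%:R * psi a p)))%:E)%E.
Proof.
move=> p_gt0 pa a_lt1; rewrite -expR_ln_chernoff //.
set x := _ / _.
have a_gt0 : 0 < a by exact: lt_trans pa.
have x_ge1 : 1 <= x by rewrite ler_pdivlMr ?mul1r ?mulr_gt0 ?subr_gt0 //; nra.
have := card_occurring_gt_expR (ln x) (a * #|J|%:R) (ln_ge0 x_ge1).
by rewrite lnK // posrE; lra.
Qed.

End IndependentEventsCount.

Lemma borel_set_dist_gt {R : realType} {V : normedModType R} (mu : V) (r : R) :
  borel_set [set y : V | r < `|y - mu|].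
Proof.
apply: sub_sigma_algebra; apply: (@open_comp _ _ (fun y => `|y - mu|) [set x | r < x]).
  move=> y _; apply: (@continuous_comp _ _ _ (fun y : V => y - mu) (fun v : V => `|v|)).
    by apply: continuousB; [exact: cvg_id | exact: cst_continuous].
  exact: norm_continuous.
exact: open_gt.
Qed.

Lemma prob_many_far_le {R : realType} {V : normedModType R} {d}
    {T : measurableType d} (P : probability T R) {mu : V} {alpha p eps tau : R}
    {k : nat} {J : {set 'I_k}} {muh : 'I_k -> T -> V} {G : set T} :
  0 < p < alpha -> alpha < 1 -> tau < (alpha - p) / (1 - p) ->
  #|J|%:R = (1 - tau) * k%:R ->
  (forall j, random_element (muh j)) -> indep_family P J muh ->
  (forall j, j \in J -> (P [set w | (eps < `|muh j w - mu|)%R] <= p%:E)%E) ->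
  measurable G ->
  (forall w, G w -> alpha * k%:R < #|[pred j | eps < `|muh j w - mu|]|%:R) ->
  (P G <= (expR (- (k%:R * (1 - tau) * psi ((alpha - tau) / (1 - tau)) p)))%:E)%E.
Proof.
move=> /andP[p_gt0 p_lt] alpha_lt1 tau_lt cardJ rand_muh indep far_le_p mG many_far.
pose far j w := (eps < `|muh j w - mu|)%R.
have far_meas j : measurable [set w | far j w].
  exact: (rand_muh j _ (borel_set_dist_gt mu eps)).
have far_indep (S : {set 'I_k}) : S \subset J ->
    P (\bigcap_(j in [set j | j \in S]) [set w | far j w]) =
    (\prod_(j in S) P [set w | far j w])%E.
  move=> SJ; exact: (indep S (fun=> [set y | eps < `|y - mu|]) SJ
    (fun j _ => borel_set_dist_gt mu eps)).
have p_lt1 : 0 < 1 - p by lra.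
move: tau_lt; rewrite ltr_pdivlMr // => tau_lt.
have tau_lt1 : tau < 1 by rewrite -(ltr_pM2r p_lt1) mul1r; lra.
have pa : p < (alpha - tau) / (1 - tau) by rewrite ltr_pdivlMr ?subr_gt0 //; nra.
have a_lt1 : (alpha - tau) / (1 - tau) < 1.
  by rewrite ltr_pdivrMr ?subr_gt0 // mul1r; lra.
have -> : k%:R * (1 - tau) = #|J|%:R by rewrite cardJ mulrC.
apply: le_trans _ (card_occurring_gt_psi P J far p far_meas far_indep far_le_p
  _ p_gt0 pa a_lt1).
apply: le_measure; rewrite ?inE //; first exact: measurable_card_occurring_gt.
by move=> w /many_far far_k; apply: card_setI_gt; rewrite ?card_ord.
Qed.

Theorem mainTheorem5 (R : realType) (V : completeNormedModType R)
  (d : measure_display) (T : measurableType d) (P : probability T R)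
  (mu : V) (alpha p eps tau : R) (k : nat) (J : {set 'I_k})
  (muh : 'I_k -> T -> V) (med : T -> V) :
  separable_space V -> reflexive_space V ->
  0 < alpha < 1 / 2 -> 0 < p < alpha -> 0 < eps ->
  0 <= tau < (alpha - p) / (1 - p) ->
  (#|J|%:R = (1 - tau) * k%:R) ->
  (forall j, random_element (muh j)) ->
  indep_family P J muh ->
  (forall j, j \in J -> (P [set w | (eps < `|muh j w - mu|)%R] <= p%:E)%E) ->
  random_element med ->
  (forall w, is_geomed (fun j => muh j w) (med w)) ->
  ((P [set w | ((2 * (1 - alpha) / (1 - 2 * alpha)) * eps < `|med w - mu|)%R]
     <= (expR (- (k%:R * (1 - tau) * psi ((alpha - tau) / (1 - tau)) p)))%:E)%E)
  /\
  (hilbert_norm V ->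
   (P [set w | (((1 - alpha) * Num.sqrt (1 / (1 - 2 * alpha))) * eps < `|med w - mu|)%R]
     <= (expR (- (k%:R * (1 - tau) * psi ((alpha - tau) / (1 - tau)) p)))%:E)%E).
Proof.
(* Separability and reflexivity only serve to make a geometric median exist; here
   one is given. *)
move=> _ _ alpha_bounds p_bounds eps_gt0 /andP[_ tau_lt] cardJ rand_muh indep far_le_p
  rand_med med_geomed.
have med_far_meas (C : R) : measurable [set w | (C * eps < `|med w - mu|)%R].
  exact: rand_med _ (borel_set_dist_gt mu (C * eps)).
have [k0|k_gt0] := posnP k.
  have -> : k%:R = 0 :> R by rewrite k0.
  by rewrite !mul0r oppr0 expR0; split=> [|_]; apply: probability_le1.
have alpha_lt1 : alpha < 1 by move: alpha_bounds => /andP[_]; lra.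
have tail C := prob_many_far_le P p_bounds alpha_lt1 tau_lt cardJ rand_muh indep
  far_le_p (med_far_meas C).
split=> [|[ip [ipC [ip_linear ip_norm]]]]; apply: tail => w far_med.
  exact: geomed_far_count k_gt0 alpha_bounds (ltW eps_gt0) (med_geomed w) far_med.
exact: (geomed_far_count_ip ipC ip_linear ip_norm k_gt0 alpha_bounds (ltW eps_gt0)
  (med_geomed w) far_med).
Qed.
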